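(* Let $\mathbb F$ be a field, $d\ge 1$ and $1\le m\le d$ integers, $\sigma\in\mathbb Z^d$ a signature vector, $\psi=(\psi_1,\dots,\psi_d)\in\mathbb F^d$, and let $\mathbf D$ be a $(d;m)$ signed determinant message matrix with signature $\sigma$ (for any admissible choice of its symbols). Let $\Xi=\Xi^{(m)}_{\sigma,\psi}$ be the repair-encoder matrix. Then for every $m$-subset $\mathcal I\subseteq[d]$, $$\sum_{y=1}^{d}\psi_y\,\mathbf D_{y,\mathcal I}=\sum_{i\in\mathcal I}(-1)^{\sigma(i)+\mathrm{ind}_{\mathcal I}(i)}\,[\mathbf D\,\Xi]_{i,\mathcal I\setminus\{i\}}.$$
   Context: Notation: $[d]=\{1,\dots,d\}$; for a finite set $\mathcal I$ of integers and an integer $x$, $\mathrm{ind}_{\mathcal I}(x)=|\{y\in\mathcal I: y\le x\}|$. $(d;m)$ signed determinant message matrix with signature $\sigma$: choose values $v_{x,\mathcal X}\in\mathbb F$ for every $m$-subset $\mathcal X\subseteq[d]$ and $x\in\mathcal X$, and values $w_{y,\mathcal Y}\in\mathbb F$ for every $(m+1)$-subset $\mathcal Y\subseteq[d]$ and $y\in\mathcal Y$, such that for every such $\mathcal Y$ the parity equation $\sum_{y\in\mathcal Y}(-1)^{\mathrm{ind}_{\mathcal Y}(y)}w_{y,\mathcal Y}=0$ holds (the values $w_{y,\mathcal Y}$ with $y<\max\mathcal Y$ and all $v$'s are free; $w_{\max\mathcal Y,\mathcal Y}$ is determined by the parity equation). $\mathbf D$ has rows indexed by $x\in[d]$ and columns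 indexed by $m$-subsets $\mathcal I\subseteq[d]$, with $\mathbf D_{x,\mathcal I}=(-1)^{\sigma(x)}v_{x,\mathcal I}$ if $x\in\mathcal I$ and $\mathbf D_{x,\mathcal I}=(-1)^{\sigma(x)}w_{x,\mathcal I\cup\{x\}}$ if $x\notin\mathcal I$. (For $m=0$, $\mathbf D$ is the all-zero $d\times 1$ matrix with column indexed by $\varnothing$.) Repair-encoder matrix $\Xi^{(m)}_{\sigma,\psi}$: rows indexed by $m$-subsets $\mathcal I\subseteq[d]$, columns by $(m-1)$-subsets $\mathcal J\subseteq[d]$, with entry $(-1)^{\sigma(y)+\mathrm{ind}_{\mathcal I}(y)}\psi_y$ if $\mathcal J\subseteq\mathcal I$ and $\mathcal I\setminus\mathcal J=\{y\}$, and $0$ otherwise. *)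

From HB Require Import structures.
From mathcomp Require Import all_boot all_order all_algebra.
Set Implicit Arguments. Unset Strict Implicit. Unset Printing Implicit Defensive.
Import Order.TTheory GRing.Theory Num.Theory.
Local Open Scope ring_scope.

(* [d] is modelled by 'I_d (0-based, order-preserving relabelling x |-> x+1).
   Subsets of [d] are {set 'I_d}. *)

Definition ind (d : nat) (I : {set 'I_d}) (x : 'I_d) : nat :=
  #|[set y in I | (y <= x)%N]|.

Definition parity_ok (F : fieldType) (d m : nat)
  (w : 'I_d -> {set 'I_d} -> F) : Prop :=
  forall Y : {set 'I_d}, #|Y| = m.+1 ->
    \sum_(y in Y) (-1) ^+ (ind Y y) * w y Y = 0.

(* Entries of the (d;m) signed determinant message matrix D with signature
   sigma, built from symbols v (v_{x,X}, x in X, |X| = m) and w (w_{y,Y},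
   y in Y, |Y| = m+1). *)
Definition sdmm (F : fieldType) (d m : nat) (sigma : 'I_d -> int)
  (v w : 'I_d -> {set 'I_d} -> F) (x : 'I_d) (I : {set 'I_d}) : F :=
  if m == 0%N then 0 else
  (-1) ^ (sigma x) * (if x \in I then v x I else w x (x |: I)).

(* Repair-encoder matrix Xi^{(m)}_{sigma,psi}: row index an m-subset I,
   column index an (m-1)-subset J. *)
Definition Xi (F : fieldType) (d : nat) (sigma : 'I_d -> int) (psi : 'I_d -> F)
  (I J : {set 'I_d}) : F :=
  if (J \subset I) && (#|I :\: J| == 1%N) then
    match [pick y in I :\: J] with
    | Some y => (-1) ^ (sigma y + (ind I y)%:Z) * psi y
    | None => 0
    end
  else 0.

Definition DXi (F : fieldType) (d m : nat) (sigma : 'I_d -> int)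
  (psi : 'I_d -> F) (v w : 'I_d -> {set 'I_d} -> F) (i : 'I_d) (J : {set 'I_d}) : F :=
  \sum_(I : {set 'I_d} | #|I| == m) sdmm m sigma v w i I * Xi sigma psi I J.

From HB Require Import structures.
From mathcomp Require Import all_boot all_order all_algebra.
From mathcomp Require Import ring zify.
Set Implicit Arguments.
Unset Strict Implicit.
Unset Printing Implicit Defensive.
Import Order.TTheory GRing.Theory Num.Theory.
Local Open Scope ring_scope.

(* Only the columns I' = y |: (I :\ i) of D meet the column I :\ i of Xi.  For
   y = i they give back psi_i D_{i,I}; for y outside I, with Y = y |: I, the
   entries D_{i,I'} are all w-symbols of Y, and moving y into place in Y
   costs exactly one extra sign, so the parity equation of Y collapses the
   sum over i to psi_y D_{y,I}. *)

Lemma signz_mulss (F : fieldType) (z : int) : (-1 : F) ^ z * (-1) ^ z = 1.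
Proof. by rewrite -expfzMl mulrNN mulr1 exp1rz. Qed.

Lemma ind_setU1 (d : nat) (S : {set 'I_d}) (x z : 'I_d) :
  x \notin S -> ind (x |: S) z = (ind S z + (x <= z)%N)%N.
Proof.
move=> xS; rewrite /ind; case: (leqP x z) => xz.
  have -> : [set y in x |: S | (y <= z)%N] = x |: [set y in S | (y <= z)%N].
    by apply/setP => u; rewrite !inE; case: eqVneq => [->|].
  by rewrite cardsU1 inE (negbTE xS) addnC.
have -> : [set y in x |: S | (y <= z)%N] = [set y in S | (y <= z)%N].
  apply/setP => u; rewrite !inE; case: eqVneq => [->|] //=.
  by rewrite (negbTE xS) leqNgt xz.
by rewrite addn0.
Qed.

Lemma ind_exchange (d : nat) (I : {set 'I_d}) (i y : 'I_d) :
  i \in I -> y \notin I ->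
  (ind I i + ind (y |: (I :\ i)) y).+1 = (ind (y |: I) i + ind (y |: I) y)%N.
Proof.
move=> iI yI; have yIi : y \notin I :\ i by rewrite !inE negb_and yI orbT.
have iNy : nat_of_ord i != y by apply: contraNneq yI => /val_inj <-.
have indIy : ind I y = (ind (I :\ i) y + (i <= y))%N.
  by rewrite -{1}(setD1K iI) ind_setU1 // setD11.
rewrite !ind_setU1 // indIy leqnn.
by move: iNy; case: ltngtP; lia.
Qed.

Section RepairEncoder.

Variables (F : fieldType) (d m : nat) (sigma : 'I_d -> int) (psi : 'I_d -> F).
Variables (v w : 'I_d -> {set 'I_d} -> F).

Lemma Xi_setU1 (J : {set 'I_d}) (y : 'I_d) : y \notin J ->
  Xi sigma psi (y |: J) J = (-1) ^ (sigma y + (ind (y |: J) y)%:Z) * psi y.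
Proof.
move=> yJ; rewrite /Xi; have -> : (y |: J) :\: J = [set y].
  apply/setP => u; rewrite !inE.
  by case: eqVneq => [->|] /=; [rewrite yJ | case: (u \in J)].
by rewrite subsetU1 cards1 pick_set1.
Qed.

Lemma Xi_eq0 (K J : {set 'I_d}) :
  K \notin [set y |: J | y in ~: J] -> Xi sigma psi K J = 0.
Proof.
rewrite /Xi; case: ifP => // /andP [JK /cards1P [y KJ]] /imsetP []; exists y.
  by rewrite inE; apply: contraT; rewrite negbK => yJ; move: (set11 y);
     rewrite -KJ inE yJ.
by rewrite -(setID K J) (setIidPr JK) KJ setUC.
Qed.

Lemma DXi_expand (i : 'I_d) (J : {set 'I_d}) : #|J|.+1 = m ->
  DXi m sigma psi v w i J =
  \sum_(y in ~: J) sdmm m sigma v w i (y |: J) *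
                   ((-1) ^ (sigma y + (ind (y |: J) y)%:Z) * psi y).
Proof.
move=> cardJ; rewrite /DXi (bigID (mem [set y |: J | y in ~: J])) /=.
rewrite [X in _ + X]big1 ?addr0 => [|K /andP [_ /Xi_eq0 ->]]; last first.
  by rewrite mulr0.
rewrite (eq_bigl (mem [set y |: J | y in ~: J])) => [|K] /=; last first.
  apply/andb_idl => /imsetP [y]; rewrite inE => yJ ->.
  by rewrite cardsU1 yJ add1n cardJ.
rewrite big_imset /= => [|y y']; last first.
  rewrite !inE => yJ _ eqJ; move: (setU11 y J); rewrite eqJ in_setU1.
  by rewrite (negbTE yJ) orbF => /eqP.
by apply: eq_bigr => y; rewrite inE => yJ; rewrite Xi_setU1.
Qed.

Hypothesis m_gt0 : (0 < m)%N.

Lemma sdmm_notin (x : 'I_d) (I : {set 'I_d}) : x \notin I ->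
  sdmm m sigma v w x I = (-1) ^ sigma x * w x (x |: I).
Proof. by move=> xI; rewrite /sdmm (gtn_eqF m_gt0) (negbTE xI). Qed.

Lemma repair_offdiag (I : {set 'I_d}) (y : 'I_d) :
  parity_ok m w -> #|I| = m -> y \notin I ->
  \sum_(i in I) (-1) ^ (sigma i + (ind I i)%:Z) *
      (sdmm m sigma v w i (y |: (I :\ i)) *
       ((-1) ^ (sigma y + (ind (y |: (I :\ i)) y)%:Z) * psi y))
  = psi y * sdmm m sigma v w y I.
Proof.
move=> parity cardI yI; set Y := y |: I.
have := parity Y; rewrite cardsU1 yI cardI => /(_ erefl).
rewrite big_setU1 //= => /eqP; rewrite addrC addr_eq0 => /eqP sumI.
transitivity ((-1) ^ sigma y * psi y * - (-1) ^+ ind Y y *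
              \sum_(i in I) (-1) ^+ ind Y i * w i Y); last first.
  rewrite sumI sdmm_notin // -/Y.
  transitivity ((-1) ^+ ind Y y * (-1) ^+ ind Y y *
                (psi y * ((-1) ^ sigma y * w y Y))); first ring.
  by rewrite -expr2 sqrr_sign mul1r.
rewrite big_distrr; apply: eq_bigr => i iI.
have iNy : i != y by apply: contraNneq yI => <-.
have iI' : i \notin y |: (I :\ i) by rewrite !inE eqxx /= (negbTE iNy).
rewrite /= sdmm_notin // setUCA setD1K // -/Y.
have := ind_exchange iI yI; rewrite -/Y => /(congr1 (fun n => (-1 : F) ^+ n)).
rewrite exprS !exprD mulN1r => /(canRL (@opprK _)) signs.
rewrite !expfzDr ?oppr_eq0 ?oner_eq0 // -!exprnP.
transitivity ((-1) ^ sigma i * (-1) ^ sigma i *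
  ((-1) ^+ ind I i * (-1) ^+ ind (y |: I :\ i) y) *
  ((-1) ^ sigma y * psi y * w i Y)); first ring.
by rewrite signz_mulss mul1r signs; ring.
Qed.

End RepairEncoder.

Theorem proposition3 (F : fieldType) (d m : nat) (hd : (1 <= d)%N)
  (hm1 : (1 <= m)%N) (hmd : (m <= d)%N)
  (sigma : 'I_d -> int) (psi : 'I_d -> F)
  (v w : 'I_d -> {set 'I_d} -> F) (hw : parity_ok m w)
  (I : {set 'I_d}) (hI : #|I| = m) :
  \sum_(y < d) psi y * sdmm m sigma v w y I =
  \sum_(i in I) (-1) ^ (sigma i + (ind I i)%:Z) * DXi m sigma psi v w i (I :\ i).
Proof.
set s := fun i => (-1 : F) ^ (sigma i + (ind I i)%:Z).
set c := fun J y => (-1 : F) ^ (sigma y + (ind (y |: J) y)%:Z) * psi y.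
have splitDXi i : i \in I -> s i * DXi m sigma psi v w i (I :\ i) =
    psi i * sdmm m sigma v w i I +
    \sum_(y in ~: I) s i * (sdmm m sigma v w i (y |: (I :\ i)) * c (I :\ i) y).
  move=> iI; rewrite DXi_expand; last by rewrite -hI (cardsD1 i I) iI.
  have -> : ~: (I :\ i) = i |: ~: I.
    by apply/setP => u; rewrite !inE; case: eqVneq.
  rewrite big_setU1 ?inE ?negbK //= mulrDr big_distrr /= setD1K //.
  congr (_ + _); rewrite /s mulrCA [X in _ * X]mulrA.
  by rewrite signz_mulss mul1r mulrC.
rewrite (eq_bigr _ splitDXi) big_split /= exchange_big /=.
rewrite [LHS](bigID (mem I)) /=; congr (_ + _); symmetry.
rewrite (eq_bigl (fun y => y \notin I)) => [|y]; last by rewrite inE.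
by apply: eq_bigr => y yI; rewrite repair_offdiag.
Qed.
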